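(* Let $X$ be a rearrangement invariant space on $(0,\infty)$. If $L_\infty\hookrightarrow X$, then $X$ contains a lattice isometric copy of $\ell_\infty$.
   Context: A rearrangement invariant space on $(0,\infty)$ (Lebesgue measure) is a Banach space $X\subset L_0(0,\infty)$ such that $|f|\le|g|$ a.e., $g\in X$ imply $f\in X$, $\|f\|_X\le\|g\|_X$, containing an a.e. positive function, and such that equimeasurable functions have equal norms (if $f\in X$ and $g$ has the same distribution function, then $g\in X$ and $\|g\|_X=\|f\|_X$). $L_\infty\hookrightarrow X$ means $L_\infty(0,\infty)\subset X$ with continuous inclusion. A lattice isometric copy of $\ell_\infty$ is the image of a linear isometric embedding $T:\ell_\infty\to X$ that is a lattice homomorphism. *)

From HB Require Import structures.
From mathcomp Require Import all_boot all_order all_algebra.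
From mathcomp Require Import all_classical all_reals all_analysis.
Set Implicit Arguments. Unset Strict Implicit. Unset Printing Implicit Defensive.
Import Order.TTheory GRing.Theory Num.Theory.
Import numFieldNormedType.Exports.
Local Open Scope classical_set_scope.
Local Open Scope ring_scope.

Section RI.
Variable R : realType.

Definition Dom : set R := `]0, +oo[%classic.
Definition leb := (@lebesgue_measure R).

Definition aeD (P : R -> Prop) : Prop := {ae leb, forall x, Dom x -> P x}.

Definition L0 (f : R -> R) : Prop := measurable_fun Dom f.

Definition distrib (f : R -> R) (t : R) : \bar R :=
  leb (Dom `&` [set x | t < `|f x|]).

Definition equimeasurable (f g : R -> R) : Prop :=
  forall t, 0 < t -> distrib f t = distrib g t.

(* A rearrangement invariant (Banach function) space on (0,oo):
   X is a set of measurable functions (elements identified a.e.),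
   nrm its norm. *)
Record ri_space := RISpace {
  X : set (R -> R);
  nrm : (R -> R) -> R;
  X_L0 : forall f, X f -> L0 f;
  X_0 : X (fun _ => 0);
  X_add : forall f g, X f -> X g -> X (f \+ g);
  X_scale : forall (a : R) f, X f -> X (fun x => a * f x);
  nrm_ge0 : forall f, X f -> 0 <= nrm f;
  nrm_eq0 : forall f, X f -> (nrm f = 0 <-> aeD (fun x => f x = 0));
  nrm_scale : forall (a : R) f, X f -> nrm (fun x => a * f x) = `|a| * nrm f;
  nrm_triangle : forall f g, X f -> X g -> nrm (f \+ g) <= nrm f + nrm g;
  X_complete : forall u : nat -> R -> R, (forall n, X (u n)) ->
    (forall e : R, 0 < e -> exists N : nat, forall m n : nat,
        (N <= m)%N -> (N <= n)%N -> nrm (u m \- u n) < e) ->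
    exists f, X f /\ (fun n => nrm (u n \- f)) @ \oo --> (0 : R);
  X_ideal : forall f g, L0 f -> X g -> aeD (fun x => `|f x| <= `|g x|) ->
    X f /\ nrm f <= nrm g;
  X_pos : exists g, X g /\ aeD (fun x => 0 < g x);
  X_ri : forall f g, X f -> L0 g -> equimeasurable f g ->
    X g /\ nrm g = nrm f
}.

Definition Linf_embeds (E : ri_space) : Prop :=
  exists C : R, forall f, L0 f -> forall M : R, 0 <= M ->
    aeD (fun x => `|f x| <= M) -> X E f /\ nrm E f <= C * M.

Definition bounded_seq (a : nat -> R) : Prop := exists M : R, forall n, `|a n| <= M.
Definition linf_norm (a : nat -> R) : R := sup (range (fun n => `|a n|)).

(* a lattice isometric copy of ell_oo in X: the image of a linear isometric
   lattice homomorphism T : ell_oo -> X (equalities in X are a.e. on (0,oo)) *)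
Definition lattice_isometric_copy_linf (E : ri_space) : Prop :=
  exists T : (nat -> R) -> (R -> R),
    (forall a, bounded_seq a -> X E (T a)) /\
    (forall (c : R) a b, bounded_seq a -> bounded_seq b ->
       aeD (fun x => T (fun n => c * a n + b n) x = c * T a x + T b x)) /\
    (forall a, bounded_seq a -> nrm E (T a) = linf_norm a) /\
    (forall a, bounded_seq a ->
       aeD (fun x => T (fun n => `|a n|) x = `|T a x|)).

End RI.

(* Split (0, +oo) into countably many sets A_n of infinite measure: A_n is the
   union of the unit intervals [k, k+1) whose index k codes a pair (n, j).
   Each indicator 1_{A_n} is equimeasurable with the constant 1 (which lies in
   X and has norm ||1|| > 0), so ||1_{A_n}|| = ||1||.  The map
   a |-> (sum_n a_n 1_{A_n}) / ||1|| is a linear lattice homomorphism, and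
   |a_m| 1_{A_m} <= |sum_n a_n 1_{A_n}| <= ||a||_oo 1 squeezes its norm
   between every |a_m| and ||a||_oo. *)
From mathcomp Require Import all_boot all_order all_algebra.
From mathcomp Require Import all_classical all_reals all_analysis.
Set Implicit Arguments. Unset Strict Implicit. Unset Printing Implicit Defensive.
Import Order.TTheory GRing.Theory Num.Theory.
Import numFieldNormedType.Exports.
Local Open Scope classical_set_scope.
Local Open Scope ring_scope.

Lemma DomE (R : realType) (x : R) : Dom x <-> 0 < x.
Proof. by rewrite /Dom /= in_itv /= andbT. Qed.

Lemma measurable_Dom (R : realType) : measurable (@Dom R).
Proof. exact: measurable_itv. Qed.

Lemma lebesgue_Dom (R : realType) : leb (@Dom R) = +oo%E.
Proof. by rewrite /leb /Dom lebesgue_measure_itv /= ltry. Qed.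

Lemma aeDW (R : realType) (P : R -> Prop) : (forall x, Dom x -> P x) -> aeD P.
Proof. by move=> P_Dom; rewrite /aeD /leb; exact: aeW. Qed.

Lemma aeD_exists (R : realType) (P : R -> Prop) : aeD P -> exists x, Dom x /\ P x.
Proof.
rewrite /aeD /leb => -[N [mN N0 PN]]; apply: contrapT => noP.
have DomN : @Dom R `<=` N.
  by move=> x Dx; apply: PN => Px; apply: noP; exists x; split; last exact: Px.
have := lebesgue_Dom R; rewrite /leb => Dom_oo.
suff : (+oo <= 0 :> \bar R)%E by rewrite leye_eq.
have := le_measure (@lebesgue_measure R) (mem_set (@measurable_Dom R)) (mem_set mN) DomN.
by rewrite -{1}Dom_oo -N0.
Qed.

Lemma measurable_fun_truncn_comp (R : realType) d (T : measurableType d)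
    (F : nat -> T) :
  measurable_fun (@Dom R) (fun x => F (Num.truncn x)).
Proof.
move=> _ Y mY.
have -> : @Dom R `&` (fun x => F (Num.truncn x)) @^-1` Y =
    \bigcup_k (@Dom R `&` [set` `[k%:R, k.+1%:R[] `&` [set _ | Y (F k)]).
  apply/seteqP; split => x /=.
  - move=> [Dx Yx]; exists (Num.truncn x) => //; split => //; split => //=.
    by rewrite in_itv /= truncn_itv // ltW // -DomE.
  - move=> [k _ [[Dx kx] Yk]]; split => //.
    by rewrite (truncn_def (kx : k%:R <= x < k.+1%:R)).
apply: bigcup_measurable => k _; apply: measurableI.
  exact: measurableI (@measurable_Dom R) (measurable_itv _).
have [Yk|Yk] := pselect (Y (F k)).
  by rewrite (_ : [set _ | _] = setT) //; apply/seteqP; split.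
by rewrite (_ : [set _ | _] = set0) //; apply/seteqP; split.
Qed.

Lemma lebesgue_bigcup_unit_itv (R : realType) (s : nat -> nat) : injective s ->
  leb (\bigcup_j [set` `](s j)%:R, (s j).+1%:R[] : set R) = +oo%E.
Proof.
move=> s_inj; pose I j : set R := [set` `](s j)%:R, (s j).+1%:R[].
have I_disj : trivIset setT I.
  move=> i j _ _ [x []]; rewrite /I /= !in_itv /= => /andP[ix xi] /andP[jx xj].
  have ij : (s i)%:R < (s j).+1%:R :> R := lt_trans ix xj.
  have ji : (s j)%:R < (s i).+1%:R :> R := lt_trans jx xi.
  by rewrite !ltr_nat !ltnS in ij ji; apply/s_inj/anti_leq; rewrite ij ji.
have I1 j : leb (I j) = 1%E.
  rewrite /leb /I lebesgue_measure_itv /= lte_fin ltr_nat ltnSn -EFinB.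
  by rewrite -natr1 addrAC subrr add0r.
rewrite /leb measure_semi_bigcup //; last exact: bigcup_measurable.
apply/eqyP => r r_gt0.
apply: le_trans (nneseries_lim_ge (Num.truncn r).+1 (fun j _ _ => measure_ge0 _ _)).
rewrite (eq_bigr (fun _ => 1%E)); last by move=> j _; exact: I1.
by rewrite sumEFin sumr_const_nat subn0 lee_fin ltW // truncnS_gt.
Qed.

Lemma distrib_indic (R : realType) (S : set R) t : 0 < t ->
  distrib \1_S t = if t < 1 then leb (@Dom R `&` S) else 0%E.
Proof.
move=> t_gt0; rewrite /distrib /indic; case: ltP => t1.
  congr leb; apply/seteqP; split => x [Dx] /=.
    case: (boolP (x \in S)) => [/set_mem //|_].
    by rewrite normr0 ltNge (ltW t_gt0).
  by move/mem_set => ->; rewrite normr1.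
rewrite (_ : _ `&` _ = set0) ?measure0 //; apply/seteqP; split => // x [_] /=.
by case: (x \in S); rewrite ?normr1 ?normr0 ltNge ?t1 // (le_trans ler01 t1).
Qed.

Lemma equimeasurable_indic (R : realType) (S S' : set R) :
  leb (@Dom R `&` S) = leb (@Dom R `&` S') -> equimeasurable \1_S \1_S'.
Proof. by move=> SS' t t_gt0; rewrite !distrib_indic // SS'. Qed.

Section cells.
Variable R : realType.

Definition cell_index (x : R) : nat := head 0%N (CodeSeq.decode (Num.truncn x)).
Definition cell (n : nat) : set R := [set x | cell_index x = n].
Definition cell_fun (a : nat -> R) (x : R) : R := a (cell_index x).

Lemma measurable_fun_cell_index_comp d (T : measurableType d) (F : nat -> T) :
  measurable_fun (@Dom R) (fun x => F (cell_index x)).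
Proof. exact: (measurable_fun_truncn_comp (F \o head 0%N \o CodeSeq.decode)). Qed.

Lemma indic_cellE n : \1_(cell n) = fun x => (cell_index x == n)%:R :> R.
Proof.
apply/funext => x; rewrite /indic.
case: (boolP (x \in cell n)) => [/set_mem -> | /negP xn]; first by rewrite eqxx.
by case: eqP => // /mem_set.
Qed.

Lemma measurable_fun_indic_cell n : L0 \1_(cell n).
Proof.
rewrite indic_cellE.
exact: (measurable_fun_cell_index_comp (fun k => (k == n)%:R : R)).
Qed.

Lemma measurable_Dom_cell n : measurable (@Dom R `&` cell n).
Proof.
have -> : @Dom R `&` cell n = @Dom R `&` (\1_(cell n) : R -> R) @^-1` [set 1].
  apply/seteqP; split => x [Dx] /=; rewrite /indic.
    by move/mem_set => ->.
  by case: (boolP (x \in cell n)) => [/set_mem //|_ /eqP]; rewrite eq_sym oner_eq0.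
exact: measurable_fun_indic_cell n (@measurable_Dom R) _ (measurable_set1 1).
Qed.

Lemma lebesgue_Dom_cell n : leb (@Dom R `&` cell n) = +oo%E.
Proof.
pose s j := CodeSeq.code [:: n; j].
have s_inj : injective s by move=> i j /(can_inj CodeSeq.codeK) [].
apply/eqP; rewrite eq_le leey -(lebesgue_bigcup_unit_itv R s_inj) /=.
apply: le_measure; rewrite ?inE;
  [exact: bigcup_measurable | exact: measurable_Dom_cell |].
move=> x [j _]; rewrite /= in_itv /= => /andP[sx xs]; split.
  by apply/DomE; rewrite (le_lt_trans _ sx).
by rewrite /cell /cell_index /= (@truncn_def _ _ (s j)) ?CodeSeq.codeK // ltW.
Qed.

End cells.

Section linf_norm.
Variable R : realType.
Implicit Type a : nat -> R.

Lemma linf_norm_ub a n : bounded_seq a -> `|a n| <= linf_norm a.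
Proof. by move=> [M aM]; apply: ub_le_sup; [exists M => _ [m _ <-] | exists n]. Qed.

Lemma linf_norm_ge0 a : bounded_seq a -> 0 <= linf_norm a.
Proof. by move=> a_bdd; exact: le_trans (normr_ge0 _) (linf_norm_ub 0 a_bdd). Qed.

Lemma linf_norm_le a M : (forall n, `|a n| <= M) -> linf_norm a <= M.
Proof. by move=> aM; apply: ge_sup; [exists `|a 0%N|, 0%N | move=> _ [m _ <-]]. Qed.

End linf_norm.

Section ri_space_theory.
Variables (R : realType) (E : ri_space R).
Hypothesis X1 : X E (cst 1).

Lemma X_ideal_everywhere f g : L0 f -> X E g ->
  (forall x, Dom x -> `|f x| <= `|g x|) -> X E f /\ nrm E f <= nrm E g.
Proof. by move=> mf Xg fg; apply: X_ideal mf Xg (aeDW fg). Qed.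

Lemma nrm_cst1_gt0 : 0 < nrm E (cst 1).
Proof.
rewrite lt_neqAle nrm_ge0 // andbT; apply/eqP => /esym/(nrm_eq0 X1).
by move/aeD_exists => [x [_ /eqP]]; rewrite oner_eq0.
Qed.

Lemma nrm_indic_pinfty S : L0 \1_S -> leb (@Dom R `&` S) = +oo%E ->
  X E \1_S /\ nrm E \1_S = nrm E (cst 1).
Proof.
move=> mS S_oo; apply: X_ri X1 mS _; rewrite -indicT.
by apply: equimeasurable_indic; rewrite setIT lebesgue_Dom.
Qed.

Lemma nrm_cell_fun_le a : bounded_seq a ->
  X E (cell_fun a) /\ nrm E (cell_fun a) <= linf_norm a * nrm E (cst 1).
Proof.
move=> a_bdd; have L_ge0 := linf_norm_ge0 a_bdd.
rewrite -[X in X * _]ger0_norm // -nrm_scale //.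
apply: X_ideal_everywhere (measurable_fun_cell_index_comp a) (X_scale _ X1) _ => x _.
by rewrite mulr1 (ger0_norm L_ge0); exact: linf_norm_ub.
Qed.

Lemma nrm_cell_fun_ge a m : X E (cell_fun a) ->
  `|a m| * nrm E (cst 1) <= nrm E (cell_fun a).
Proof.
move=> Xa.
have [Xm <-] := nrm_indic_pinfty (measurable_fun_indic_cell m) (lebesgue_Dom_cell R m).
rewrite -[X in X * _]normr_id -nrm_scale // (indic_cellE R).
apply: (X_ideal_everywhere _ Xa _).2.
  exact: (measurable_fun_cell_index_comp (fun k => `|a m| * (k == m)%:R)).
move=> x _; rewrite /cell_fun.
by case: eqP => [->|_]; rewrite ?mulr1 ?normr_id // mulr0 normr0.
Qed.

Lemma nrm_cell_fun a : bounded_seq a ->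
  X E (cell_fun a) /\ nrm E (cell_fun a) = linf_norm a * nrm E (cst 1).
Proof.
move=> a_bdd; have [Xa le_a] := nrm_cell_fun_le a_bdd.
split => //; apply/eqP; rewrite eq_le le_a /= -ler_pdivlMr ?nrm_cst1_gt0 //.
by apply: linf_norm_le => m; rewrite ler_pdivlMr ?nrm_cst1_gt0 // nrm_cell_fun_ge.
Qed.

End ri_space_theory.

Theorem lemma3p10 (R : realType) (E : ri_space R) :
  Linf_embeds E -> lattice_isometric_copy_linf E.
Proof.
move=> [C embC].
have [|X1 _] := embC (cst 1) (measurable_cst _) 1 ler01.
  by apply: aeDW => x _; rewrite normr1.
pose c := nrm E (cst 1); have c_gt0 : 0 < c := nrm_cst1_gt0 X1.
exists (fun a x => c^-1 * cell_fun a x); split; [|split; [|split]].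
- by move=> a /(nrm_cell_fun X1) [Xa _]; exact: X_scale.
- by move=> k a b _ _; apply: aeDW => x _; rewrite /cell_fun mulrDr mulrCA.
- move=> a /(nrm_cell_fun X1) [Xa nrm_a]; rewrite nrm_scale // nrm_a -/c.
  by rewrite ger0_norm ?invr_ge0 ?ltW // mulrCA mulVf ?mulr1 // gt_eqF.
- by move=> a _; apply: aeDW => x _; rewrite /cell_fun normrM ger0_norm // invr_ge0 ltW.
Qed.
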